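(* Let $X$ be a finite set and $\mathcal{F}$ a symmetric clone on $X$ with $r(\mathcal{F})=3$. Let $f^*\in\mathcal{F}_{[3]}$ be not a monarchy and let $\bar a\in X^3$ be without repetition such that $f^*(\bar a')=a'_1$ for every permutation $\bar a'=(a'_1,a'_2,a'_3)$ of $\bar a$, but it is not the case that $f^*(\bar b)=b_1$ for all $\bar b\in X^3$ that are not one-to-one. Then there is $g\in\mathcal{F}_{[3]}$ satisfying (a) or (b): (a) $g(\bar b)=b_1$ for every $\bar b\in X^3$ with a repetition, and $g(\bar a')=a'_2$ for every permutation $\bar a'$ of $\bar a$; (b) $g(\bar b)=g_{3;1,2}(\bar b)$ for every $\bar b\in X^3$ with a repetition, and $g(\bar a')=a'_1$ for every permutation $\bar a'$ of $\bar a$.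
   Context: A clone on $X$: set of finitary operations on $X$ containing all projections and closed under composition; $\mathcal{F}_{[r]}$ its $r$-place members. Symmetric: for $f\in\mathcal{F}_{[n]}$ and a permutation $\pi$ of $X$, $\bar x\mapsto\pi^{-1}(f(\pi x_1,\dots,\pi x_n))$ is in $\mathcal{F}$. A monarchy is a projection. $r(\mathcal{F})=\min\{r:\text{some } f\in\mathcal{F}_{[r]} \text{ is not a monarchy}\}$. $g_{3;1,2}(x_1,x_2,x_3)=x_2$ if $x_2=x_3$, and $x_1$ otherwise. *)

From mathcomp Require Import all_boot all_fingroup.
Set Implicit Arguments. Unset Strict Implicit. Unset Printing Implicit Defensive.

(* An n-place operation on X: a map X^n -> X, with X^n = ('I_n -> X).
   Coordinates are indexed 0..n-1 (paper's x_1 is index 0). *)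
Definition op (X : Type) (n : nat) := ('I_n -> X) -> X.

Definition opset (X : Type) := forall n : nat, op X n -> Prop.

Definition proj (X : Type) (n : nat) (i : 'I_n) : op X n := fun x => x i.

Definition is_monarchy (X : Type) (n : nat) (f : op X n) : Prop :=
  exists i : 'I_n, forall x, f x = x i.

Definition compose (X : Type) (n m : nat) (f : op X n) (g : 'I_n -> op X m) : op X m :=
  fun x => f (fun i => g i x).

Definition is_clone (X : Type) (F : opset X) : Prop :=
  (forall n (i : 'I_n), F n (proj i)) /\
  (forall n m (f : op X n) (g : 'I_n -> op X m),
      F n f -> (forall i, F m (g i)) -> F m (compose f g)).

Definition is_symmetric (X : finType) (F : opset X) : Prop :=
  forall n (f : op X n) (pi : {perm X}),
    F n f -> F n (fun x => (pi^-1)%g (f (fun i => pi (x i)))).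

Definition r_is (X : Type) (F : opset X) (r : nat) : Prop :=
  (exists f : op X r, F r f /\ ~ is_monarchy f) /\
  (forall k, k < r -> forall f : op X k, F k f -> is_monarchy f).

Definition i1 : 'I_3 := @Ordinal 3 0 erefl.
Definition i2 : 'I_3 := @Ordinal 3 1 erefl.
Definition i3 : 'I_3 := @Ordinal 3 2 erefl.

Definition g312 (X : eqType) : op X 3 :=
  fun x => if x i2 == x i3 then x i2 else x i1.

From mathcomp Require Import all_boot all_fingroup.
From Stdlib Require Import FunctionalExtensionality.
Set Implicit Arguments. Unset Strict Implicit. Unset Printing Implicit Defensive.

(* Since every binary member of F is a projection, the restriction of a ternary
   member f to any two-element subset of X does not depend on the subset: it is
   given by three bits saying, for each coordinate, whether f returns that
   coordinate when it is the odd one out.  So every map bool -> X is a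
   homomorphism from a "pattern operation" on bool to (X, fs).  The pattern
   operation is the first projection on injective triples, so the hypothesis on
   the permutations of a makes a : 'I_3 -> X a homomorphism as well.
   Homomorphisms commute with term operations, hence it suffices to find, for
   each of the seven patterns other than the first projection, a term whose
   pattern operation behaves as required in (a) or (b): a finite computation. *)

Definition triple (T : Type) (x y z : T) (i : 'I_3) : T := nth x [:: x; y; z] i.

Lemma triple_eta (T : Type) (c : 'I_3 -> T) : c = triple (c i1) (c i2) (c i3).
Proof.
by apply: functional_extensionality => -[[|[|[|?]]] ?] //; congr c; apply: val_inj.
Qed.

Lemma map_triple (A B : Type) (h : A -> B) (x y z : A) :
  (fun i => h (triple x y z i)) = triple (h x) (h y) (h z).
Proof. by apply: functional_extensionality => -[[|[|[|?]]] ?]. Qed.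

Lemma bool_triple_ind (P : ('I_3 -> bool) -> Prop) :
  (forall b1 b2 b3, P (triple b1 b2 b3)) -> forall d, P d.
Proof. by move=> Pt d; rewrite (triple_eta d). Qed.

Lemma compose_triple (X : Type) n (f : op X 3) (g1 g2 g3 : op X n) x :
  compose f (triple g1 g2 g3) x = f (triple (g1 x) (g2 x) (g3 x)).
Proof. by rewrite /compose -(map_triple (fun g : op X n => g x)). Qed.

Lemma triple_injective (T : eqType) (x y z : T) :
  x != y -> x != z -> y != z -> injective (triple x y z).
Proof.
move=> nxy nxz nyz u v.
case: u v => [[|[|[|?]]] ?] [[|[|[|?]]] ?] //; rewrite /triple /= => E.
all: try exact: val_inj.
all: by move: nxy nxz nyz; rewrite E eqxx.
Qed.

Lemma noninjective_factors_bool (T : eqType) (c : 'I_3 -> T) :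
  ~ injective c -> exists (k : bool -> T) (d : 'I_3 -> bool), c = fun i => k (d i).
Proof.
move=> ninj; rewrite {1}(triple_eta c).
have [e12 | n12] := eqVneq (c i1) (c i2).
  pose k b := if b then c i3 else c i1.
  by exists k, (triple false false true); rewrite map_triple /k e12.
have [e13 | n13] := eqVneq (c i1) (c i3).
  pose k b := if b then c i2 else c i1.
  by exists k, (triple false true false); rewrite map_triple /k e13.
have [e23 | n23] := eqVneq (c i2) (c i3).
  pose k b := if b then c i1 else c i2.
  by exists k, (triple true false false); rewrite map_triple /k e23.
by case: ninj; rewrite (triple_eta c); apply: triple_injective.
Qed.

Definition op_hom (A X : Type) n (h : A -> X) (phi : op A n) (f : op X n) :=
  forall x : 'I_n -> A, f (fun i => h (x i)) = h (phi x).

Lemma compose_hom (A X : Type) n m (h : A -> X) (phi : op A n) (f : op X n)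
    (psi : 'I_n -> op A m) (g : 'I_n -> op X m) :
  op_hom h phi f -> (forall i, op_hom h (psi i) (g i)) ->
  op_hom h (compose phi psi) (compose f g).
Proof.
move=> hf hg x; rewrite /compose -hf; congr f.
by apply: functional_extensionality => i; apply: hg.
Qed.

Inductive term := Var of 'I_3 | App of term & term & term.

Fixpoint eval (T : Type) (f : op T 3) (t : term) : op T 3 :=
  match t with
  | Var i => proj i
  | App t1 t2 t3 => compose f (triple (eval f t1) (eval f t2) (eval f t3))
  end.

Lemma eval_in_clone (X : Type) (F : opset X) (f : op X 3) (t : term) :
  is_clone F -> F 3 f -> F 3 (eval f t).
Proof.
move=> [Fproj Fcomp] Ff; elim: t => [i | t1 F1 t2 F2 t3 F3] /=; first exact: Fproj.
by apply: Fcomp => // -[[|[|[|?]]] ?].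
Qed.

Lemma eval_hom (A X : Type) (h : A -> X) (phi : op A 3) (f : op X 3) (t : term) :
  op_hom h phi f -> op_hom h (eval phi t) (eval f t).
Proof.
move=> hf; elim: t => [i | t1 H1 t2 H2 t3 H3] //=.
by apply: compose_hom => // -[[|[|[|?]]] ?].
Qed.

Section PatternOp.
Variables (o1 o2 o3 : bool).

(* [o_k]: whether coordinate k is returned when it is the odd one out. *)
Definition pattern_op {T : eqType} : op T 3 := fun x =>
  if x i2 == x i3 then (if o1 then x i1 else x i2)
  else if x i1 == x i3 then (if o2 then x i2 else x i1)
  else if x i1 == x i2 then (if o3 then x i3 else x i1)
  else x i1.

Lemma pattern_op_injective (T : eqType) (x : 'I_3 -> T) :
  injective x -> pattern_op x = x i1.
Proof. by move=> xinj; rewrite /pattern_op !(inj_eq xinj). Qed.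

Lemma pattern_op_const (T : eqType) (x : T) : pattern_op (fun _ => x) = x.
Proof. by rewrite /pattern_op eqxx if_same. Qed.

Lemma pattern_op_hom_inj (A B : eqType) (k : A -> B) :
  injective k -> op_hom k pattern_op pattern_op.
Proof. by move=> kinj x; rewrite /pattern_op !(inj_eq kinj) !(fun_if k). Qed.

Lemma pattern_op_hom_bool (T : eqType) (k : bool -> T) :
  op_hom k pattern_op pattern_op.
Proof.
move=> d; have [ek | nek] := eqVneq (k false) (k true).
  have -> : (fun i => k (d i)) = fun _ => k true.
    by apply: functional_extensionality => i; case: (d i).
  by rewrite pattern_op_const; case: (pattern_op d).
apply: pattern_op_hom_inj => -[] [] // /eqP.
  by rewrite eq_sym (negbTE nek).
by rewrite (negbTE nek).
Qed.

Lemma eval_pattern_op_injective (t : term) (T : eqType) (x : 'I_3 -> T) :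
  injective x -> eval pattern_op t x = x (eval pattern_op t (fun i => i)).
Proof. by move=> xinj; apply: (eval_hom t (pattern_op_hom_inj xinj) (fun i => i)). Qed.

End PatternOp.

Lemma pattern_op_proj1 (T : eqType) (x : 'I_3 -> T) :
  pattern_op true false false x = x i1.
Proof. by rewrite /pattern_op !if_same. Qed.

Lemma g312_pattern_op (T : eqType) (x : 'I_3 -> T) :
  g312 x = pattern_op false false false x.
Proof. by rewrite /g312 /pattern_op !if_same. Qed.

Lemma pattern_op_term (o1 o2 o3 : bool) : (o1, o2, o3) != (true, false, false) ->
  exists t : term,
    (forall d : 'I_3 -> bool, eval (pattern_op o1 o2 o3) t d = d i1) /\
    eval (pattern_op o1 o2 o3) t (fun i => i) = i2
  \/
    (forall d : 'I_3 -> bool, eval (pattern_op o1 o2 o3) t d = g312 d) /\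
    eval (pattern_op o1 o2 o3) t (fun i => i) = i1.
Proof.
case: o1 o2 o3 => [] [] [] // _.
- exists (App (Var i2) (Var i3) (App (Var i1) (Var i2) (Var i3))).
  by left; split => //; apply: bool_triple_ind; do 3 case.
- exists (App (Var i2) (Var i1) (App (Var i3) (Var i2) (Var i1))).
  by left; split => //; apply: bool_triple_ind; do 3 case.
- exists (App (Var i2) (App (Var i3) (Var i1) (Var i2)) (Var i1)).
  by left; split => //; apply: bool_triple_ind; do 3 case.
- exists (App (App (Var i1) (Var i2) (Var i3)) (Var i2) (Var i3)).
  by right; split => //; apply: bool_triple_ind; do 3 case.
- exists (App (Var i2) (Var i1) (Var i3)).
  by left; split => //; apply: bool_triple_ind; do 3 case.
- exists (App (Var i2) (Var i3) (Var i1)).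
  by left; split => //; apply: bool_triple_ind; do 3 case.
- exists (App (Var i1) (Var i2) (Var i3)).
  by right; split => //; apply: bool_triple_ind; do 3 case.
Qed.

Lemma ternary_minor (X : Type) (F : opset X) (f : op X 3) (c1 c2 c3 : bool) :
  is_clone F -> (forall g : op X 2, F 2 g -> is_monarchy g) -> F 3 f ->
  exists o : bool, forall x y : X,
    f (triple (if c1 then y else x) (if c2 then y else x) (if c3 then y else x)) =
    if o then y else x.
Proof.
move=> [Fproj Fcomp] F2_proj Ff; pose bit b : 'I_2 := if b then ord_max else ord0.
pose minor := compose f (triple (proj (bit c1)) (proj (bit c2)) (proj (bit c3))).
have [|j minor_j] := F2_proj minor.
  by apply: Fcomp => // -[[|[|[|?]]] ?] //; exact: Fproj.
exists (j == ord_max) => x y.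
move/(_ (fun k => if k == ord_max then y else x)): minor_j.
rewrite /minor compose_triple; clear minor.
by case: c1 c2 c3 => [] [] []; apply.
Qed.

Lemma exists_pattern_op_hom (X : Type) (F : opset X) (f : op X 3) :
  is_clone F -> (forall g : op X 2, F 2 g -> is_monarchy g) -> F 3 f ->
  exists o1 o2 o3 : bool, forall h : bool -> X, op_hom h (pattern_op o1 o2 o3) f.
Proof.
move=> Fclone F2_proj Ff.
have [o1 /= P1] := ternary_minor true false false Fclone F2_proj Ff.
have [o2 /= P2] := ternary_minor false true false Fclone F2_proj Ff.
have [o3 /= P3] := ternary_minor false false true Fclone F2_proj Ff.
exists o1, o2, o3 => h x; rewrite (triple_eta x) map_triple /pattern_op /triple /=.
by case: (x i1) (x i2) (x i3) => [] [] []; rewrite /= ?P1 ?P2 ?P3 (fun_if h).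
Qed.

Lemma hom_of_permutations (X : eqType) (f : op X 3) (a : 'I_3 -> X) (o1 o2 o3 : bool) :
  injective a -> (forall s : 'S_3, f (fun i => a (s i)) = a (s i1)) ->
  (forall h : bool -> X, op_hom h (pattern_op o1 o2 o3) f) ->
  op_hom a (pattern_op o1 o2 o3) f.
Proof.
move=> ainj fperm fbool x.
have [xinj | /noninjective_factors_bool [k [d ->]]] := injectiveP x.
  have -> : (fun i => a (x i)) = fun i => a (perm xinj i).
    by apply: functional_extensionality => i; rewrite permE.
  by rewrite fperm permE pattern_op_injective.
rewrite pattern_op_hom_bool; exact: (fbool (fun b => a (k b))).
Qed.

Theorem claim2 (X : finType) (F : opset X)
  (hclone : is_clone F) (hsym : is_symmetric F) (hr : r_is F 3)
  (fs : op X 3) (hfs : F 3 fs) (hfsnm : ~ is_monarchy fs)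
  (a : 'I_3 -> X) (ha : injective a)
  (hperm : forall s : 'S_3, fs (fun i => a (s i)) = a (s i1))
  (hnot : ~ (forall b : 'I_3 -> X, ~ injective b -> fs b = b i1)) :
  exists g : op X 3, F 3 g /\
    ( ((forall b : 'I_3 -> X, ~ injective b -> g b = b i1) /\
       (forall s : 'S_3, g (fun i => a (s i)) = a (s i2)))
    \/
      ((forall b : 'I_3 -> X, ~ injective b -> g b = g312 b) /\
       (forall s : 'S_3, g (fun i => a (s i)) = a (s i1)))).
Proof.
have [o1 [o2 [o3 fs_bool]]] := exists_pattern_op_hom hclone (hr.2 2 isT) hfs.
have fs_a := hom_of_permutations ha hperm fs_bool.
have not_proj1 : (o1, o2, o3) != (true, false, false).
  apply/negP => /eqP[e1 e2 e3]; subst o1 o2 o3.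
  apply: hnot => b /noninjective_factors_bool [k [d ->]].
  by rewrite fs_bool pattern_op_proj1.
have g_perm t (s : 'S_3) : eval fs t (fun i => a (s i)) =
    a (s (eval (pattern_op o1 o2 o3) t (fun i => i))).
  by rewrite (eval_hom t fs_a) (eval_pattern_op_injective _ _ _ _ (@perm_inj _ s)).
have [t [[t_bool t_id] | [t_bool t_id]]] := pattern_op_term not_proj1;
  exists (eval fs t); split; try exact: eval_in_clone; [left | right];
  split=> [_ /noninjective_factors_bool [k [d ->]] | s]; rewrite ?g_perm ?t_id //.
- by rewrite (eval_hom t (fs_bool k)) t_bool.
- by rewrite (eval_hom t (fs_bool k)) t_bool !g312_pattern_op pattern_op_hom_bool.
Qed.
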